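(* Let $Q$ be a non-degenerate quadratic form on a finite-dimensional real vector space $V$ with associated bilinear form $Q(\cdot,\cdot)$, let $E\subset V$ be a subspace, $E^Q=\{v: Q(v,e)=0\ \forall e\in E\}$ and $E_0:=E\cap E^Q$. Let $T:E\to V/E$ be linear. Then $Q(Tx,x)=0$ for all $x\in E_0$ (this is well-defined since $x\in E^Q$) if and only if there exists a linear map $T':V\to V$ lifting $T$ (i.e. $T'(e)+E=T(e)$ for all $e\in E$) with $Q(T'x,x)=0$ for all $x\in V$, i.e. $T'\in\mathfrak{so}(Q)$. *)

From HB Require Import structures.
From mathcomp Require Import all_boot all_order all_algebra.
Set Implicit Arguments. Unset Strict Implicit. Unset Printing Implicit Defensive.
Import Order.TTheory GRing.Theory Num.Theory.
Local Open Scope ring_scope.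

(* V = 'rV[R]_n ; a quadratic form on V is given by its (symmetric) Gram
   matrix Q; the associated bilinear form is bil Q u v = u Q v^T. *)
Definition bil (R : realFieldType) (n : nat) (Q : 'M[R]_n) (u v : 'rV[R]_n) : R :=
  (u *m Q *m v^T) 0 0.

Definition Qnondegenerate (R : realFieldType) (n : nat) (Q : 'M[R]_n) : Prop :=
  forall v : 'rV[R]_n, (forall w : 'rV[R]_n, bil Q v w = 0) -> v = 0.

(* E^Q = {v | Q(v,e) = 0 for all e in E}; E is represented as the row space
   of a square matrix (mxalgebra). *)
Definition Qorth (R : realFieldType) (n : nat) (Q : 'M[R]_n) (E : 'M[R]_n)
  (v : 'rV[R]_n) : Prop :=
  forall e : 'rV[R]_n, (e <= E)%MS -> bil Q v e = 0.

(* A linear map T : E -> V/E, represented by any set-theoretic choice of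
   representatives f : V -> V (only values on E matter): linearity modulo E. *)
Definition lin_to_quot (R : realFieldType) (n : nat) (E : 'M[R]_n)
  (f : 'rV[R]_n -> 'rV[R]_n) : Prop :=
  forall (a : R) (e1 e2 : 'rV[R]_n), (e1 <= E)%MS -> (e2 <= E)%MS ->
    ((f (a *: e1 + e2) - (a *: f e1 + f e2))%R <= E)%MS.

From HB Require Import structures.
From mathcomp Require Import all_boot all_order all_algebra.
Set Implicit Arguments. Unset Strict Implicit. Unset Printing Implicit Defensive.
Import Order.TTheory GRing.Theory Num.Theory.
Local Open Scope ring_scope.

(* Fix a lift L of T and set M(x, y) := Q(x L, y).  By double orthogonality,
   T' lifts T exactly when Q(x T', y) = M(x, y) for x in E and y in E^Q, so one
   needs an alternating form that agrees with M on E x E^Q.  The only constraint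
   lives on E0 x E0, where it is the polarisation of the hypothesis
   M(x, x) = 0; splitting E + E^Q as E0 + (E \ E^Q) + (E^Q \ E) and using the
   three corresponding projections gives an explicit such form, and T' is read
   off from it through Q^-1. *)

Section BilinearForm.
Variables (R : realFieldType) (n : nat).
Implicit Types (X Y A B : 'M[R]_n) (a b c : 'rV[R]_n).

Lemma bil_tr X a b : bil X a b = bil X^T b a.
Proof. by rewrite /bil -[a *m X *m b^T]trmxK [LHS]mxE !trmx_mul trmxK mulmxA. Qed.

Lemma bil_sym X a b : X^T = X -> bil X a b = bil X b a.
Proof. by move=> Xsym; rewrite bil_tr Xsym. Qed.

Lemma bilDl X a b c : bil X (a + b) c = bil X a c + bil X b c.
Proof. by rewrite /bil !mulmxDl mxE. Qed.

Lemma bilBl X a b c : bil X (a - b) c = bil X a c - bil X b c.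
Proof. by rewrite /bil !mulmxBl !mxE. Qed.

Lemma bilDr X a b c : bil X c (a + b) = bil X c a + bil X c b.
Proof. by rewrite /bil raddfD /= mulmxDr mxE. Qed.

Lemma bilBm X Y a b : bil (X - Y) a b = bil X a b - bil Y a b.
Proof. by rewrite /bil mulmxBr mulmxBl !mxE. Qed.

Lemma bil_mulmxl A X a b : bil (A *m X) a b = bil X (a *m A) b.
Proof. by rewrite /bil mulmxA. Qed.

Lemma bil_mulmx A X B a b : bil (A *m X *m B^T) a b = bil X (a *m A) (b *m B).
Proof. by rewrite /bil trmx_mul !mulmxA. Qed.

End BilinearForm.

Section Orthogonal.
Variables (R : realFieldType) (n : nat) (Q : 'M[R]_n).

Definition orthmx (E : 'M[R]_n) := kermx (Q *m E^T).

Lemma sub_orthmxP (E : 'M[R]_n) (y : 'rV[R]_n) :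
  reflect (Qorth Q E y) (y <= orthmx E)%MS.
Proof.
apply: (iffP sub_kermxP) => [yQE e /submxP[c ->] | yE].
  by rewrite /bil trmx_mul !mulmxA -(mulmxA y) yQE !mul0mx mxE.
apply/rowP => i; rewrite [RHS]mxE -(yE (row i E) (row_sub i E)) /bil mulmxA !mxE.
by apply: eq_bigr => k _; rewrite !mxE.
Qed.

Lemma Qnondegenerate_unitmx : Qnondegenerate Q -> Q \in unitmx.
Proof.
move=> Qnd; rewrite -row_free_unit -kermx_eq0; apply/rowV0P => v /sub_kermxP vQ.
by apply: Qnd => w; rewrite /bil vQ mul0mx mxE.
Qed.

Hypotheses (Qsym : Q^T = Q) (Qunit : Q \in unitmx).

Lemma mxrank_orthmx (E : 'M[R]_n) : \rank (orthmx E) = (n - \rank E)%N.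
Proof.
by rewrite mxrank_ker (eqmxMfull _ _) ?row_full_unit // mxrank_tr.
Qed.

Lemma sub_orthmx_orthmx (E : 'M[R]_n) : (E <= orthmx (orthmx E))%MS.
Proof.
apply/row_subP => i; apply/sub_orthmxP => y /sub_orthmxP yE.
by rewrite bil_sym // yE ?row_sub.
Qed.

Lemma orthmx_orthmx_sub (E : 'M[R]_n) : (orthmx (orthmx E) <= E)%MS.
Proof.
rewrite -(mxrank_leqif_sup (sub_orthmx_orthmx E)).2.
by rewrite !mxrank_orthmx subKn ?rank_leq_col.
Qed.

End Orthogonal.

Section Lift.
Variables (R : realFieldType) (n : nat) (E : 'M[R]_n) (f : 'rV[R]_n -> 'rV[R]_n).
Hypothesis Tlin : lin_to_quot E f.

Lemma lin_to_quot_sum (I : finType) (c : I -> R) (r : I -> 'rV[R]_n) :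
  (forall i, (r i <= E)%MS) ->
  (f (\sum_i c i *: r i) - \sum_i c i *: f (r i) <= E)%MS.
Proof.
move=> rE; pose K y1 y2 := (y1 <= E)%MS && (f y1 - y2 <= E)%MS.
suff /andP[] : K (\sum_i c i *: r i) (\sum_i c i *: f (r i)) by [].
apply: (big_rec2 K) => [|i y1 y2 _ /andP[y1E fy1E]].
  have := Tlin 1 (sub0mx _ _) (sub0mx _ _).
  rewrite scaler0 addr0 scale1r opprD addrA subrr add0r eqmx_opp.
  by rewrite /K sub0mx subr0.
apply/andP; split; first by rewrite addmx_sub ?scalemx_sub.
have -> : f (c i *: r i + y1) - (c i *: f (r i) + y2) =
    (f (c i *: r i + y1) - (c i *: f (r i) + f y1)) + (f y1 - y2).
  by rewrite !opprD !addrA subrK.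
exact: addmx_sub (Tlin (c i) (rE i) y1E) fy1E.
Qed.

Lemma lin_to_quot_lift :
  exists L : 'M[R]_n, forall e, (e <= E)%MS -> (e *m L - f e <= E)%MS.
Proof.
exists (pinvmx E *m \matrix_i f (row i E)) => e eE.
set c := e *m pinvmx E.
have eD : e = \sum_i c 0 i *: row i E by rewrite -mulmx_sum_row /c mulmxKpV.
rewrite mulmxA -/c mulmx_sum_row; under eq_bigr do rewrite rowK.
by rewrite [in f e]eD -eqmx_opp opprB lin_to_quot_sum // => i; apply: row_sub.
Qed.

End Lift.

Section AlternatingExtension.
Variables (R : realFieldType) (n : nat).
Implicit Types (A B C D : 'M[R]_n) (x : 'rV[R]_n).

Lemma proj_mx_eq A B C D x : (C :&: D = 0)%MS ->
  (A <= C)%MS -> (B <= D)%MS -> (x <= A + B)%MS ->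
  x *m proj_mx A B = x *m proj_mx C D.
Proof.
move=> dxCD sAC sBD /sub_addsmxP[[u v] /= ->].
have dxAB : (A :&: B = 0)%MS.
  by apply/eqP; rewrite -submx0 -dxCD capmxS.
have uA := submxMl u A; have vB := submxMl v B.
rewrite !mulmxDl (proj_mx_id dxAB uA) (proj_mx_0 dxAB vB).
rewrite (proj_mx_id dxCD (submx_trans uA sAC)).
by rewrite (proj_mx_0 dxCD (submx_trans vB sBD)).
Qed.

Lemma capmx_addsmx_diff A B : (A :&: B :&: ((A :\: B) + (B :\: A)) = 0)%MS.
Proof.
apply/eqP/rowV0P => v; rewrite sub_capmx => /andP[vAB].
case/sub_addsmxP => -[a b] /= vD.
have bA : (b *m (B :\: A) <= A)%MS.
  rewrite (_ : _ *m _ = v - a *m (A :\: B))%MS; last by rewrite vD addrAC subrr add0r.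
  rewrite addmx_sub ?eqmx_opp ?(submx_trans vAB) ?capmxSl //.
  by rewrite (submx_trans (submxMl _ _)) ?diffmxSl.
have b0 : b *m (B :\: A)%MS = 0.
  by apply/eqP; rewrite -submx0 -(capmx_diff B A) sub_capmx submxMl.
apply/eqP; rewrite -submx0 -(capmx_diff A B) sub_capmx.
by rewrite {1}vD b0 addr0 submxMl (submx_trans vAB) ?capmxSr.
Qed.

Lemma alternating_extension (M E F : 'M[R]_n) :
  (forall x, (x <= E :&: F)%MS -> bil M x x = 0) ->
  exists W : 'M[R]_n, (forall x, bil W x x = 0) /\
    (forall e y, (e <= E)%MS -> (y <= F)%MS -> bil W e y = bil M e y).
Proof.
move=> Malt.
have Manti x y : (x <= E :&: F)%MS -> (y <= E :&: F)%MS ->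
    bil M x y + bil M y x = 0.
  move=> xE0 yE0; have := Malt _ (addmx_sub xE0 yE0).
  by rewrite bilDl !bilDr !Malt // add0r addr0.
set E0 := (E :&: F)%MS; set E1 := (E :\: F)%MS; set E2 := (F :\: E)%MS.
set pi := proj_mx E E2; set rho := proj_mx F E1; set sig := proj_mx E0 (E1 + E2)%MS.
have dxEE2 : (E :&: E2 = 0)%MS by rewrite capmxC capmx_diff.
have dxFE1 : (F :&: E1 = 0)%MS by rewrite capmxC capmx_diff.
have dxE0 : (E0 :&: (E1 + E2) = 0)%MS := capmx_addsmx_diff E F.
have rhoE (e : 'rV_n) : (e <= E)%MS -> e *m rho = e *m sig.
  move=> eE; have eD : (e <= E0 + E1)%MS by rewrite addsmxC addsmx_diff_cap_eq.
  rewrite -(proj_mx_eq dxFE1 (capmxSr E F) (submx_refl E1) eD).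
  exact: proj_mx_eq dxE0 (submx_refl E0) (addsmxSl E1 E2) eD.
have piF (y : 'rV_n) : (y <= F)%MS -> y *m pi = y *m sig.
  move=> yF; have yD : (y <= E0 + E2)%MS.
    by rewrite /E0 capmxC addsmxC addsmx_diff_cap_eq.
  rewrite -(proj_mx_eq dxEE2 (capmxSl E F) (submx_refl E2) yD).
  exact: proj_mx_eq dxE0 (submx_refl E0) (addsmxSr E1 E2) yD.
(* For e in E and y in F, e pi = e, y rho = y, e rho = e sig and y pi = y sig,
   so W(e, y) = M(e, y) - (M(y sig, e sig) + M(e sig, y sig)), and the bracket
   vanishes because sig lands in E0. *)
pose W := pi *m M *m rho^T - rho *m M^T *m pi^T - sig *m M *m sig^T.
have WE a b : bil W a b = bil M (a *m pi) (b *m rho)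
    - bil M (b *m pi) (a *m rho) - bil M (a *m sig) (b *m sig).
  by rewrite /W !bilBm !bil_mulmx (bil_tr M^T) trmxK.
exists W; split=> [x | e y eE yF].
  by rewrite WE subrr sub0r Malt ?oppr0 ?proj_mx_sub.
rewrite WE (proj_mx_id dxEE2 eE) (proj_mx_id dxFE1 yF) rhoE // piF //.
by rewrite -addrA -opprD Manti ?proj_mx_sub ?subr0.
Qed.

End AlternatingExtension.

Theorem mainTheorem10 (R : realFieldType) (n : nat) (Q : 'M[R]_n)
  (Qsym : Q^T = Q) (Qnd : Qnondegenerate Q)
  (E : 'M[R]_n) (f : 'rV[R]_n -> 'rV[R]_n) (Tlin : lin_to_quot E f) :
  (forall x : 'rV[R]_n, (x <= E)%MS -> Qorth Q E x -> bil Q (f x) x = 0)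
  <->
  (exists T' : 'M[R]_n,
     (forall e : 'rV[R]_n, (e <= E)%MS -> ((e *m T' - f e)%R <= E)%MS) /\
     (forall x : 'rV[R]_n, bil Q (x *m T') x = 0)).
Proof.
split=> [fE0 | [T' [T'lift T'alt]] x xE xE0]; last first.
  have -> : f x = x *m T' - (x *m T' - f x) by rewrite opprB addrC subrK.
  by rewrite bilBl T'alt bil_sym // xE0 ?T'lift // subrr.
have Qunit := Qnondegenerate_unitmx Qnd.
have [L Llift] := lin_to_quot_lift Tlin.
have Malt x : (x <= E :&: orthmx Q E)%MS -> bil (L *m Q) x x = 0.
  rewrite sub_capmx => /andP[xE /sub_orthmxP xE0].
  rewrite bil_mulmxl -[x *m L](subrK (f x)) bilDl fE0 // addr0.
  by rewrite bil_sym // xE0 ?Llift.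
have [W [Walt WM]] := alternating_extension Malt.
exists (W *m invmx Q); split=> [e eE | x]; last by rewrite -bil_mulmxl mulmxKV.
have -> : e *m (W *m invmx Q) - f e =
    (e *m (W *m invmx Q) - e *m L) + (e *m L - f e) by rewrite addrA subrK.
rewrite addmx_sub ?Llift // (submx_trans _ (orthmx_orthmx_sub Qsym Qunit E)) //.
apply/sub_orthmxP => y yF.
by rewrite bilBl -!bil_mulmxl mulmxKV // WM ?subrr.
Qed.
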